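(* Let $k \geq 0$ be an integer. (i) If $k \leq 6$, then $K_{m,m+k}$ is stable for all integers $m \geq 1$. (ii) If $k \geq 7$, then there exists an integer $N(k)$ such that $K_{m,m+k}$ is stable for all integers $m > N(k)$.
   Context: For a simple graph $G$, the independence polynomial is $i(G,x)=\sum_{k=0}^{\alpha(G)} i_k(G)x^k$, where $i_k(G)$ is the number of independent sets of size $k$ in $G$ (with $i_0(G)=1$) and $\alpha(G)$ is the independence number. A graph $G$ is called stable if every root $z$ of $i(G,x)$ satisfies $\mathrm{Re}(z)\leq 0$. $K_{a,b}$ denotes the complete bipartite graph with parts of sizes $a$ and $b$; its independence polynomial is $(1+x)^a+(1+x)^b-1$. *)

From mathcomp Require Import all_boot all_order all_algebra algC.
Set Implicit Arguments. Unset Strict Implicit. Unset Printing Implicit Defensive.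
Import Order.TTheory GRing.Theory Num.Theory.
Local Open Scope ring_scope.

(* A simple graph: vertex set T (finite), edge relation e (intended symmetric
   and irreflexive). *)

Definition independent (T : finType) (e : rel T) (S : {set T}) : bool :=
  [forall x in S, forall y in S, ~~ e x y].

Definition indep_count (T : finType) (e : rel T) (k : nat) : nat :=
  #|[set S : {set T} | independent e S & #|S| == k]|.

(* i(G,x) = sum_k i_k(G) x^k, as a polynomial over the complex
   (algebraic) numbers.  Summing up to #|T| is harmless: i_k = 0 beyond alpha(G). *)
Definition indep_poly (T : finType) (e : rel T) : {poly algC} :=
  \sum_(k < #|T|.+1) (indep_count e k)%:R *: 'X^k.

Definition stable (T : finType) (e : rel T) : Prop :=
  forall z : algC, root (indep_poly e) z -> 'Re z <= 0.

Definition Kab_rel (a b : nat) : rel ('I_a + 'I_b)%type :=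
  fun x y => match x, y with
             | inl _, inr _ | inr _, inl _ => true
             | _, _ => false
             end.
Arguments Kab_rel a b : clear implicits.

(* i(K_{a,a+k}, x) = (1 + x)^a + (1 + x)^(a+k) - 1, so a root z with Re z > 0
   gives y = 1 + z with Re y > 1 and |y|^a |1 + y^k| = 1.  It therefore suffices
   to show |y|^a |1 + y^k| > 1 whenever Re y > 1.

   For k <= 6 already |y|^2 |1 + y^k|^2 > 1.  Since y^k + conj(y)^k is the
   Dickson polynomial of y + conj(y) = 2 Re y and y conj(y) = |y|^2, this is a
   polynomial inequality in s = Re y - 1 >= 0 and w = (Im y)^2 >= 0, certified by
   writing |y|^2 |1 + y^k|^2 = 1 + A(w) + s B(w) + s^2 C(s, w) with A > 0 and
   B, C >= 0 evident (sums of nonnegative monomials and squares).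

   For m >= 4 k^4, put r = |y| > 1, so |y|^m >= 1 + m (r - 1) by Bernoulli.  If
   2 k^2 (r - 1) <= 1 then y is so close to the positive real r that
   |y^k - r^k| <= r^k, whence |1 + y^k| >= 1; otherwise |1 + y^k| >= r - 1 and
   m (r - 1)^2 >= (2 k^2 (r - 1))^2 > 1. *)

From mathcomp Require Import all_boot all_order all_algebra algC.
From mathcomp Require Import ring.
Set Implicit Arguments. Unset Strict Implicit. Unset Printing Implicit Defensive.
Import Order.TTheory GRing.Theory Num.Theory.
Local Open Scope ring_scope.

Lemma independent_Kab a b (S : {set 'I_a + 'I_b}) :
  independent (Kab_rel a b) S = (S \subset inl @: setT) || (S \subset inr @: setT).
Proof.
apply/idP/idP => [/forallP indS | ].
- case: (boolP (S \subset _)) => //= /subsetPn [[i|j] jS j_notL].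
    by rewrite imset_f in j_notL.
  apply/subsetP => -[i|j'] xS; last by rewrite imset_f.
  by have /forallP/(_ (inr j)) := implyP (indS (inl i)) xS; rewrite jS.
- by case/orP => /subsetP sub; apply/forallP => x; apply/implyP => /sub/imsetP[? _ ->];
    apply/forallP => y; apply/implyP => /sub/imsetP[? _ ->].
Qed.

Lemma indep_count_Kab a b k :
  indep_count (Kab_rel a b) k = ('C(a, k) + 'C(b, k) - 'C(0, k))%N.
Proof.
pose SL : {set 'I_a + 'I_b} := inl @: setT; pose SR : {set 'I_a + 'I_b} := inr @: setT.
have card_SL : #|SL| = a by rewrite card_imset ?cardsT ?card_ord // => ? ? [].
have card_SR : #|SR| = b by rewrite card_imset ?cardsT ?card_ord // => ? ? [].
have SLR0 : SL :&: SR = set0.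
  by apply/setP => x; rewrite !inE; apply/negbTE/andP => -[/imsetP[? _ ->] /imsetP[]].
rewrite /indep_count (_ : [set S | _ & _] = [set S : {set _} | S \subset SL & #|S| == k]
  :|: [set S : {set _} | S \subset SR & #|S| == k]); last first.
  by apply/setP => S; rewrite !inE independent_Kab andb_orl.
rewrite cardsU (_ : _ :&: _ = [set S : {set _} | S \subset SL :&: SR & #|S| == k]); last first.
  by apply/setP => S; rewrite !inE subsetI andbACA andbb.
by rewrite !cards_draws SLR0 cards0 card_SL card_SR.
Qed.

Lemma sum_binomial (R : pzSemiRingType) (x : R) n N : (n <= N)%N ->
  \sum_(i < N.+1) x ^+ i *+ 'C(n, i) = (x + 1) ^+ n.
Proof.
move=> le_nN; rewrite exprD1n [RHS](big_ord_widen N.+1 (fun i => x ^+ i *+ 'C(n, i))) //.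
by rewrite [RHS]big_mkcond; apply: eq_bigr => i _; case: ltnP => // /bin_small->.
Qed.

Lemma indep_poly_Kab a b :
  indep_poly (Kab_rel a b) = ('X + 1) ^+ a + ('X + 1) ^+ b - 1.
Proof.
have C0_le k : ('C(0, k) <= 'C(a, k) + 'C(b, k))%N by case: k => [|k]; rewrite ?bin0 ?bin0n.
rewrite /indep_poly card_sum !card_ord.
under eq_bigr => k _ do rewrite indep_count_Kab scaler_nat mulrnBr // mulrnDr.
by rewrite sumrB big_split /= !sum_binomial ?leq_addr ?leq_addl ?expr0.
Qed.

Lemma stable_Kab_addn a k :
  (forall y : algC, 1 < 'Re y -> 1 < `|y| ^+ a * `|1 + y ^+ k|) ->
  stable (Kab_rel a (a + k)).
Proof.
move=> norm_gt1 z; rewrite /root indep_poly_Kab !hornerE subr_eq0 => /eqP root_z.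
rewrite real_leNgt ?Creal_Re ?real0 //; apply/negP => Re_z_gt0.
have := norm_gt1 (z + 1); rewrite raddfD /= (Creal_ReP 1 (real1 _)) ltrDr => /(_ Re_z_gt0).
by rewrite -normrX -normrM mulrDr mulr1 -exprD root_z normr1 ltxx.
Qed.

Fixpoint dickson (R : pzRingType) (k : nat) (t q : R) : R :=
  match k with
  | 0 => 2
  | 1 => t
  | (j.+1 as k').+1 => t * dickson k' t q - q * dickson j t q
  end.

Lemma dicksonSS (R : pzRingType) k (t q : R) :
  dickson k.+2 t q = t * dickson k.+1 t q - q * dickson k t q.
Proof. by []. Qed.

Lemma dicksonE (R : comPzRingType) (x1 x2 : R) k :
  x1 ^+ k + x2 ^+ k = dickson k (x1 + x2) (x1 * x2).
Proof.
elim/ltn_ind: k => -[|[|k]] IH //.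
by rewrite dicksonSS -!IH // !exprS; ring.
Qed.

Lemma mul2_Re (C : numClosedFieldType) (y : C) : 2 * 'Re y = y + y^*.
Proof. by rewrite ReE mulrC divfK ?pnatr_eq0. Qed.

Definition sqnorm_poly (R : pzRingType) k (u w : R) : R :=
  (u ^+ 2 + w) * (1 + dickson k (2 * u) (u ^+ 2 + w) + (u ^+ 2 + w) ^+ k).

Lemma sqnorm_polyE (C : numClosedFieldType) (y : C) k :
  sqnorm_poly k ('Re y) ('Im y ^+ 2) = `|y| ^+ 2 * `|1 + y ^+ k| ^+ 2.
Proof.
rewrite /sqnorm_poly -normC2_Re_Im mul2_Re normCK -dicksonE !normCK.
by rewrite rmorphD rmorph1 rmorphXn /= exprMn; ring.
Qed.

Lemma gt1_of_decomposition (R : numDomainType) (x s A B C : R) :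
  x = 1 + A + s * B + s ^+ 2 * C -> 0 <= s -> 0 < A -> 0 <= B -> 0 <= C -> 1 < x.
Proof.
move=> -> s_ge0 A_gt0 B_ge0 C_ge0.
by rewrite -addrA -addrA ltrDl ltr_wpDr // addr_ge0 ?mulr_ge0 ?exprn_ge0.
Qed.

Ltac real_poly := lazymatch goal with
  | |- is_true (_ - _ \is Num.real) => apply: realB; real_poly
  | |- is_true (_ * _ \is Num.real) => apply: realM; real_poly
  | _ => first [exact: realn | exact: real1 | by apply: ger0_real]
  end.

Ltac nneg_poly := lazymatch goal with
  | |- is_true (0 <= _ + _) => apply: addr_ge0; nneg_poly
  | |- is_true (0 <= _ * _) => apply: mulr_ge0; nneg_poly
  | |- is_true (0 <= _ / _) => apply: divr_ge0; nneg_poly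
  | |- is_true (0 <= (_ - _) ^+ 2) => apply: real_exprn_even_ge0 => //; real_poly
  | |- is_true (0 <= _ ^+ _) => apply: exprn_ge0; nneg_poly
  | _ => first [assumption | exact: ler0n | exact: ler01]
  end.

Ltac pos_poly := lazymatch goal with
  | |- is_true (0 < _ + _) => apply: ltr_wpDr; [nneg_poly | pos_poly]
  | |- is_true (0 < _ / _) => apply: divr_gt0; pos_poly
  | _ => first [exact: ltr01 | by rewrite ltr0n]
  end.

Lemma sqnorm_poly0_gt1 (R : numFieldType) (s w : R) :
  0 <= s -> 0 <= w -> 1 < sqnorm_poly 0 (1 + s) w.
Proof.
move=> s_ge0 w_ge0; apply: (gt1_of_decomposition (s := s)
  (A := 3 + 4 * w)
  (B := 8)
  (C := 4));
  by [rewrite /sqnorm_poly /=; field | pos_poly | nneg_poly].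
Qed.

Lemma sqnorm_poly1_gt1 (R : numFieldType) (s w : R) :
  0 <= s -> 0 <= w -> 1 < sqnorm_poly 1 (1 + s) w.
Proof.
move=> s_ge0 w_ge0; apply: (gt1_of_decomposition (s := s)
  (A := 3 + 5 * w + w ^+ 2)
  (B := 12 + 6 * w)
  (C := 13 + 2 * w + 6 * s + s ^+ 2));
  by [rewrite /sqnorm_poly /=; field | pos_poly | nneg_poly].
Qed.

Lemma sqnorm_poly2_gt1 (R : numFieldType) (s w : R) :
  0 <= s -> 0 <= w -> 1 < sqnorm_poly 2 (1 + s) w.
Proof.
move=> s_ge0 w_ge0; apply: (gt1_of_decomposition (s := s)
  (A := 3 + 4 * w + w ^+ 2 + w ^+ 3)
  (B := 16 + 12 * w + 6 * w ^+ 2)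
  (C := 28 + 18 * w + 3 * w ^+ 2 + 28 * s + 12 * s * w + 17 * s ^+ 2 + 3 * s ^+ 2 * w
     + 6 * s ^+ 3 + s ^+ 4));
  by [rewrite /sqnorm_poly /=; field | pos_poly | nneg_poly].
Qed.

Lemma sqnorm_poly3_gt1 (R : numFieldType) (s w : R) :
  0 <= s -> 0 <= w -> 1 < sqnorm_poly 3 (1 + s) w.
Proof.
move=> s_ge0 w_ge0; apply: (gt1_of_decomposition (s := s)
  (A := 3 + w + 4 * w ^+ 3 + w ^+ 4)
  (B := 20 + 12 * w + 18 * w ^+ 2 + 8 * w ^+ 3)
  (C := 49 + 48 * w + 36 * w ^+ 2 + 4 * w ^+ 3 + 76 * s + 76 * s * w + 24 * s * w ^+ 2
     + 80 * s ^+ 2 + 60 * s ^+ 2 * w + 6 * s ^+ 2 * w ^+ 2 + 58 * s ^+ 3 + 24 * s ^+ 3 * w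
     + 28 * s ^+ 4 + 4 * s ^+ 4 * w + 8 * s ^+ 5 + s ^+ 6));
  by [rewrite /sqnorm_poly /=; field | pos_poly | nneg_poly].
Qed.

Lemma sqnorm_poly4_gt1 (R : numFieldType) (s w : R) :
  0 <= s -> 0 <= w -> 1 < sqnorm_poly 4 (1 + s) w.
Proof.
move=> s_ge0 w_ge0; apply: (gt1_of_decomposition (s := s)
  (A := 1 + 2 * (2 * w - 1) ^+ 2 + 4 * w * (w - 1) ^+ 2 + 8 * w ^+ 3 + 5 * w ^+ 4 + w ^+ 5)
  (B := 24 + 40 * w ^+ 2 + 40 * w ^+ 3 + 10 * w ^+ 4)
  (C := 76 + 80 * w + 140 * w ^+ 2 + 60 * w ^+ 3 + 5 * w ^+ 4 + 160 * s + 240 * s * w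
     + 200 * s * w ^+ 2 + 40 * s * w ^+ 3 + 240 * s ^+ 2 + 340 * s ^+ 2 * w
     + 150 * s ^+ 2 * w ^+ 2 + 10 * s ^+ 2 * w ^+ 3 + 264 * s ^+ 3 + 280 * s ^+ 3 * w
     + 60 * s ^+ 3 * w ^+ 2 + 212 * s ^+ 4 + 140 * s ^+ 4 * w + 10 * s ^+ 4 * w ^+ 2
     + 120 * s ^+ 5 + 40 * s ^+ 5 * w + 45 * s ^+ 6 + 5 * s ^+ 6 * w + 10 * s ^+ 7 + s ^+ 8));
  by [rewrite /sqnorm_poly /=; field | pos_poly | nneg_poly].
Qed.

Lemma sqnorm_poly5_gt1 (R : numFieldType) (s w : R) :
  0 <= s -> 0 <= w -> 1 < sqnorm_poly 5 (1 + s) w.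
Proof.
move=> s_ge0 w_ge0; apply: (gt1_of_decomposition (s := s)
  (A := (3 + 4 * w * (5 * w - 2) ^+ 2 + (10 * w - 3) ^+ 2) / 4 + 5 * w ^+ 3 + 15 * w ^+ 4
     + 6 * w ^+ 5 + w ^+ 6)
  (B := 19 + (5 * w - 3) ^+ 2 + 65 * w ^+ 2 + 130 * w ^+ 3 + 60 * w ^+ 4 + 12 * w ^+ 5)
  (C := 109 + 90 * w + 390 * w ^+ 2 + 300 * w ^+ 3 + 90 * w ^+ 4 + 6 * w ^+ 5 + 290 * s
     + 540 * s * w + 830 * s * w ^+ 2 + 400 * s * w ^+ 3 + 60 * s * w ^+ 4 + 565 * s ^+ 2
     + 1170 * s ^+ 2 * w + 1050 * s ^+ 2 * w ^+ 2 + 300 * s ^+ 2 * w ^+ 3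
     + 15 * s ^+ 2 * w ^+ 4 + 834 * s ^+ 3 + 1494 * s ^+ 3 * w + 840 * s ^+ 3 * w ^+ 2
     + 120 * s ^+ 3 * w ^+ 3 + 938 * s ^+ 4 + 1260 * s ^+ 4 * w + 420 * s ^+ 4 * w ^+ 2
     + 20 * s ^+ 4 * w ^+ 3 + 794 * s ^+ 5 + 720 * s ^+ 5 * w + 120 * s ^+ 5 * w ^+ 2
     + 495 * s ^+ 6 + 270 * s ^+ 6 * w + 15 * s ^+ 6 * w ^+ 2 + 220 * s ^+ 7
     + 60 * s ^+ 7 * w + 66 * s ^+ 8 + 6 * s ^+ 8 * w + 12 * s ^+ 9 + s ^+ 10));
  by [rewrite /sqnorm_poly /=; field | pos_poly | nneg_poly].
Qed.

Lemma sqnorm_poly6_gt1 (R : numFieldType) (s w : R) :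
  0 <= s -> 0 <= w -> 1 < sqnorm_poly 6 (1 + s) w.
Proof.
move=> s_ge0 w_ge0; apply: (gt1_of_decomposition (s := s)
  (A := (2 + 2 * w + 7 * w * (9 * w - 2) ^+ 2 + (21 * w - 5) ^+ 2) / 9 + 33 * w ^+ 4
     + 21 * w ^+ 5 + 7 * w ^+ 6 + w ^+ 7)
  (B := 23 + (14 * w - 3) ^+ 2 + 14 * w ^+ 2 + 336 * w ^+ 3 + 210 * w ^+ 4 + 84 * w ^+ 5
     + 14 * w ^+ 6)
  (C := 148 + 42 * w + 945 * w ^+ 2 + 1008 * w ^+ 3 + 525 * w ^+ 4 + 126 * w ^+ 5
     + 7 * w ^+ 6 + 476 * s + 980 * s * w + 2520 * s * w ^+ 2 + 1960 * s * w ^+ 3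
     + 700 * s * w ^+ 4 + 84 * s * w ^+ 5 + 1141 * s ^+ 2 + 3045 * s ^+ 2 * w
     + 4410 * s ^+ 2 * w ^+ 2 + 2450 * s ^+ 2 * w ^+ 3 + 525 * s ^+ 2 * w ^+ 4
     + 21 * s ^+ 2 * w ^+ 5 + 2114 * s ^+ 3 + 5376 * s ^+ 3 * w + 5292 * s ^+ 3 * w ^+ 2
     + 1960 * s ^+ 3 * w ^+ 3 + 210 * s ^+ 3 * w ^+ 4 + 3059 * s ^+ 4 + 6440 * s ^+ 4 * w
     + 4410 * s ^+ 4 * w ^+ 2 + 980 * s ^+ 4 * w ^+ 3 + 35 * s ^+ 4 * w ^+ 4 + 3448 * s ^+ 5
     + 5544 * s ^+ 5 * w + 2520 * s ^+ 5 * w ^+ 2 + 280 * s ^+ 5 * w ^+ 3 + 3005 * s ^+ 6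
     + 3465 * s ^+ 6 * w + 945 * s ^+ 6 * w ^+ 2 + 35 * s ^+ 6 * w ^+ 3 + 2002 * s ^+ 7
     + 1540 * s ^+ 7 * w + 210 * s ^+ 7 * w ^+ 2 + 1001 * s ^+ 8 + 462 * s ^+ 8 * w
     + 21 * s ^+ 8 * w ^+ 2 + 364 * s ^+ 9 + 84 * s ^+ 9 * w + 91 * s ^+ 10
     + 7 * s ^+ 10 * w + 14 * s ^+ 11 + s ^+ 12));
  by [rewrite /sqnorm_poly /=; field | pos_poly | nneg_poly].
Qed.

Lemma sqnorm_poly_gt1 (R : numFieldType) k (u w : R) :
  (k <= 6)%N -> 1 <= u -> 0 <= w -> 1 < sqnorm_poly k u w.
Proof.
move=> k_le6 u_ge1 w_ge0; have s_ge0 : 0 <= u - 1 by rewrite subr_ge0.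
rewrite -(subrKC 1 u).
case: k k_le6 => [|[|[|[|[|[|[|//]]]]]]] _.
- exact: sqnorm_poly0_gt1.
- exact: sqnorm_poly1_gt1.
- exact: sqnorm_poly2_gt1.
- exact: sqnorm_poly3_gt1.
- exact: sqnorm_poly4_gt1.
- exact: sqnorm_poly5_gt1.
- exact: sqnorm_poly6_gt1.
Qed.

Lemma norm_gt1_small_k (C : numClosedFieldType) (y : C) k m :
  (k <= 6)%N -> (0 < m)%N -> 1 < 'Re y -> 1 < `|y| ^+ m * `|1 + y ^+ k|.
Proof.
move=> k_le6 m_gt0 Re_gt1.
have y_ge1 : 1 <= `|y| := le_trans (ltW Re_gt1) (leif_Re_Creal y).1.
have Im2_ge0 : 0 <= 'Im y ^+ 2 by rewrite real_exprn_even_ge0 ?Creal_Im.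
have := sqnorm_poly_gt1 k_le6 (ltW Re_gt1) Im2_ge0.
rewrite sqnorm_polyE -exprMn expr_gt1 ?mulr_ge0 // => /lt_le_trans; apply.
by rewrite ler_wpM2r ?ler_eXnr.
Qed.

Lemma bernoulli_ineq (R : numDomainType) (x : R) n :
  0 <= x -> 1 + n%:R * x <= (1 + x) ^+ n.
Proof.
move=> x_ge0; elim: n => [|n IH]; first by rewrite mul0r addr0 expr0.
have -> : 1 + n.+1%:R * x = (1 + n%:R * x) * (1 + x) - n%:R * x * x.
  by rewrite -natr1; ring.
rewrite exprSr lerBlDr (le_trans (ler_wpM2r _ IH)) ?lerDl ?mulr_ge0 //.
by rewrite addr_ge0.
Qed.

Lemma ler_norm_subXX (R : numDomainType) (x z r : R) n :
  `|x| <= r -> `|z| <= r -> `|x ^+ n - z ^+ n| <= n%:R * r ^+ n.-1 * `|x - z|.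
Proof.
move=> x_le_r z_le_r; have r_ge0 : 0 <= r := le_trans (normr_ge0 x) x_le_r.
rewrite subrXX normrM mulrC ler_wpM2r // (le_trans (ler_norm_sum _ _ _)) //.
rewrite mulr_natl -[n in _ *+ n]card_ord -sumr_const; apply: ler_sum => i _.
have i_le : (i <= n.-1)%N by rewrite -ltnS (ltn_predK (ltn_ord i)).
rewrite -(subnK i_le) exprD subnK // normrM !normrX.
by apply: ler_pM; rewrite ?exprn_ge0 ?lerXn2r ?nnegrE.
Qed.

Lemma sqr_norm_sub_norm (C : numClosedFieldType) (y : C) :
  `|y - `|y| | ^+ 2 = 2 * `|y| * (`|y| - 'Re y).
Proof.
rewrite normCK rmorphB /= (conj_Creal (normr_real y)).
have -> : (y - `|y|) * (y^* - `|y|) = y * y^* - `|y| * (y + y^*) + `|y| ^+ 2 by ring.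
by rewrite -normCK -mul2_Re; ring.
Qed.

Lemma norm_1DX_ge1 (R : numDomainType) (y : R) k :
  k%:R * `|y - `|y| | <= `|y| -> 1 <= `|1 + y ^+ k|.
Proof.
move=> near_real.
have sub_le : `|y ^+ k - `|y| ^+ k| <= `|y| ^+ k.
  apply: le_trans (ler_norm_subXX k (lexx _) _) _; first by rewrite normr_id.
  case: k near_real => [|k] near_real; first by rewrite !mul0r.
  by rewrite mulrAC exprSr [_ ^+ k * _]mulrC ler_wpM2r ?exprn_ge0.
have norm_1Dr : `|1 + `|y| ^+ k| = 1 + `|y| ^+ k.
  by apply: ger0_norm; rewrite addr_ge0 ?exprn_ge0.
have := lerB_normD (1 + `|y| ^+ k) (y ^+ k - `|y| ^+ k).
have -> : 1 + `|y| ^+ k + (y ^+ k - `|y| ^+ k) = 1 + y ^+ k by ring.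
by apply: le_trans; rewrite norm_1Dr -addrA lerDl subr_ge0.
Qed.

Lemma normB1_le_norm_1DX (R : numDomainType) (y : R) k :
  (0 < k)%N -> 1 <= `|y| -> `|y| - 1 <= `|1 + y ^+ k|.
Proof.
move=> k_gt0 y_ge1; rewrite [1 + _]addrC; apply: le_trans _ (lerB_normD _ _).
by rewrite normr1 normrX lerD2r ler_eXnr.
Qed.

Lemma gt1_large_m (R : numDomainType) (k m r a : R) :
  0 < k -> 4 * k ^+ 4 <= m -> 1 < r ->
  (2 * k ^+ 2 * (r - 1) <= 1 -> 1 <= a) -> r - 1 <= a -> 1 < (1 + m * (r - 1)) * a.
Proof.
move=> k_gt0 m_ge r_gt1 near_a far_a.
have e_gt0 : 0 < r - 1 by rewrite subr_gt0.
have m_gt0 : 0 < m by apply: lt_le_trans m_ge; rewrite mulr_gt0 ?exprn_gt0.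
have d_real : 2 * k ^+ 2 * (r - 1) \is Num.real.
  by rewrite ger0_real // !mulr_ge0 ?exprn_ge0 ?ltW.
case: (real_leP d_real (real1 R)) => [/near_a a_ge1 | d_gt1].
  apply: lt_le_trans (ler_peMr _ a_ge1); last by rewrite addr_ge0 ?mulr_ge0 ?ltW.
  by rewrite ltrDl mulr_gt0.
apply: lt_le_trans (ler_wpM2l _ far_a); last by rewrite addr_ge0 ?mulr_ge0 ?ltW.
have : 1 < (2 * k ^+ 2 * (r - 1)) ^+ 2 by rewrite exprn_egt1.
have -> : (2 * k ^+ 2 * (r - 1)) ^+ 2 = 4 * k ^+ 4 * (r - 1) ^+ 2 by ring.
move/lt_le_trans; apply; apply: le_trans (ler_wpM2r (exprn_ge0 2 (ltW e_gt0)) m_ge) _.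
by rewrite mulrDl mul1r -mulrA -expr2 lerDr ltW.
Qed.


Lemma norm_gt1_large_m (C : numClosedFieldType) (y : C) k m :
  (0 < k)%N -> (4 * k ^ 4 <= m)%N -> 1 < 'Re y -> 1 < `|y| ^+ m * `|1 + y ^+ k|.
Proof.
move=> k_gt0 m_ge Re_gt1; set r := `|y|.
have Re_le_r : 'Re y <= r := (leif_Re_Creal y).1.
have r_gt1 : 1 < r := lt_le_trans Re_gt1 Re_le_r.
have near_real : 2 * k%:R ^+ 2 * (r - 1) <= 1 -> k%:R * `|y - r| <= r.
  move=> d_le1; rewrite -(ler_pXn2r (_ : 0 < 2)%N) ?nnegrE ?mulr_ge0 ?normr_ge0 //.
  rewrite exprMn sqr_norm_sub_norm -/r.
  apply: (@le_trans _ _ (r * (2 * k%:R ^+ 2 * (r - 1)))).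
    have -> : k%:R ^+ 2 * (2 * r * (r - 'Re y)) = r * (2 * k%:R ^+ 2 * (r - 'Re y)) by ring.
    rewrite ler_pM2l ?(lt_trans ltr01) // ler_wpM2l ?mulr_ge0 ?exprn_ge0 //.
    by rewrite lerD2l lerN2 ltW.
  by rewrite expr2 ler_pM2l ?(lt_trans ltr01) // (le_trans d_le1) ?ltW.
apply: lt_le_trans (@gt1_large_m _ k%:R m%:R r `|1 + y ^+ k| _ _ r_gt1 _ _) _.
- by rewrite ltr0n.
- by rewrite -natrX -natrM ler_nat.
- by move=> /near_real; apply: norm_1DX_ge1.
- by apply: normB1_le_norm_1DX => //; rewrite ltW.
rewrite ler_wpM2r // -{2}(subrKC 1 r).
by apply: bernoulli_ineq; rewrite subr_ge0 ltW.
Qed.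

Theorem theorem3 (k : nat) :
  ((k <= 6)%N -> forall m : nat, (1 <= m)%N -> stable (Kab_rel m (m + k))) /\
  ((7 <= k)%N -> exists N : nat, forall m : nat, (N < m)%N ->
       stable (Kab_rel m (m + k))).
Proof.
split=> [k_le6 m m_gt0 | k_ge7].
  by apply: stable_Kab_addn => y; apply: norm_gt1_small_k.
exists (4 * k ^ 4)%N => m /ltnW m_ge; apply: stable_Kab_addn => y.
by apply: norm_gt1_large_m => //; apply: leq_trans k_ge7.
Qed.
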